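(* Let $n\ge1$ and $1\le i\le n$. A vector $\mu=\sum_{k=1}^n a_k\lambda_k$ (with real coefficients $a_k$) is a positive weight of the $i$-th fundamental representation $\Lambda_i$ of $a_n$ if and only if the following hold: (1) every $a_k\in\{-1,0,1\}$, not all $a_k$ are zero, the coefficient $a_k$ with the largest index $k$ among the nonzero ones equals $+1$, and the nonzero coefficients alternate in sign when ordered by their index $k$ (so the next largest nonzero one is $-1$, the next $+1$, and so on); and (2) $\sum_{k=1}^n k\,a_k=i$.
   Context: Let $e_1,\dots,e_{n+1}$ be an orthonormal basis of $\mathbb{R}^{n+1}$, $e=\sum_{i}e_i$, and $\varepsilon_i=e_i-\frac{1}{n+1}e$ ($i=1,\dots,n+1$), so that $\sum_{i=1}^{n+1}\varepsilon_i=0$; the root space of $a_n=\mathfrak{sl}_{n+1}(\mathbb C)$ is the hyperplane orthogonal to $e$. Simple roots: $\alpha_i=\varepsilon_i-\varepsilon_{i+1}$, $i=1,\dots,n$. Fundamental weights: $\lambda_i=\sum_{a=1}^i\varepsilon_a$, characterized by $\lambda_i\cdot\alpha_j=\delta_{ij}$. The $i$-th fundamental representation $\Lambda_i$ is the irreducible representation with highest weight $\lambda_i$; its weights are exactly the vectors $\sum_{k\in S}\varepsilon_k$ with $S\subseteq\{1,\dots,n+1\}$, $|S|=i$, and this set $S$ is uniquely determined by the weight. Such a weight is called positive if $n+1\notin S$, i.e. its coefficient of $\varepsilon_{n+1}$ in this $0/1$ expansion is $0$. *)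

From HB Require Import structures.
From mathcomp Require Import all_boot all_order all_algebra.
Set Implicit Arguments. Unset Strict Implicit. Unset Printing Implicit Defensive.
Import Order.TTheory GRing.Theory Num.Theory.
Local Open Scope ring_scope.

(* Vectors of R^{n+1} are row vectors 'rV[R]_(n.+1); the basis vector e_{j+1}
   of the paper is indexed by j : 'I_(n.+1) (0-based). *)

Definition eps (R : fieldType) (n : nat) (j : 'I_n.+1) : 'rV[R]_n.+1 :=
  \row_(m < n.+1) ((m == j)%:R - (n.+1)%:R^-1).

(* fundamental weight lambda_k = sum_{a=1}^k eps_a (paper indexing, 1<=k<=n) *)
Definition lambda (R : fieldType) (n k : nat) : 'rV[R]_n.+1 :=
  \sum_(a < n.+1 | (a < k)%N) eps R a.

Definition is_weight_fund (R : fieldType) (n i : nat) (mu : 'rV[R]_n.+1) : Prop :=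
  exists S : {set 'I_n.+1}, #|S| = i /\ mu = \sum_(k in S) eps R k.

Definition is_pos_weight_fund (R : fieldType) (n i : nat) (mu : 'rV[R]_n.+1) : Prop :=
  exists S : {set 'I_n.+1},
    [/\ #|S| = i, ord_max \notin S & mu = \sum_(k in S) eps R k].

(* mu = sum_{k=1}^n a_k lambda_k, with a : 'I_n -> R, a k standing for a_{k+1} *)
Definition mu_of (R : fieldType) (n : nat) (a : 'I_n -> R) : 'rV[R]_n.+1 :=
  \sum_(k < n) a k *: lambda R n k.+1.

Definition cond1 (R : fieldType) (n : nat) (a : 'I_n -> R) : Prop :=
  [/\ (forall k, a k = -1 \/ a k = 0 \/ a k = 1),
      (exists k, a k != 0),
      (forall k, a k != 0 -> (forall l : 'I_n, (k < l)%N -> a l = 0) -> a k = 1) &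
      (forall k l : 'I_n, (k < l)%N -> a k != 0 -> a l != 0 ->
         (forall m : 'I_n, (k < m)%N -> (m < l)%N -> a m = 0) -> a k = - a l)].

Definition cond2 (R : fieldType) (n i : nat) (a : 'I_n -> R) : Prop :=
  \sum_(k < n) (k.+1)%:R * a k = i%:R.

From HB Require Import structures.
From mathcomp Require Import all_boot all_order all_algebra.
From mathcomp Require Import zify ring lra.
Set Implicit Arguments. Unset Strict Implicit. Unset Printing Implicit Defensive.
Import Order.TTheory GRing.Theory Num.Theory.
Local Open Scope ring_scope.

(* Since lambda_k = eps_1 + ... + eps_k, the vector sum_k a_k lambda_k equals
   sum_j c_j eps_j with the tail sums c_j = a_j + ... + a_n.  As the eps_j sum
   to 0 and c_(n+1) = 0, such a representation is unique, so mu is a positive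
   weight of Lambda_i exactly when every c_j is 0 or 1 and sum_j c_j = i; this
   sum is sum_k k a_k.  Finally, a sequence of tail sums with values in {0,1}
   is the same thing as a nonzero coefficient sequence with values in
   {-1,0,1} whose nonzero entries alternate in sign and end with +1. *)

Section TailSums.
Variables (R : nmodType) (n : nat) (a : 'I_n -> R).

(* Indices are 0-based: [tailsum j] is the coefficient of [eps R j] in [mu_of a]. *)
Definition tailsum (j : nat) : R := \sum_(k < n | (j <= k)%N) a k.

Lemma tailsum_ge j : (n <= j)%N -> tailsum j = 0.
Proof. by move=> hj; rewrite /tailsum big1 // => k hk; have := ltn_ord k; lia. Qed.

Lemma tailsum_split j l : (j <= l)%N ->
  tailsum j = \sum_(k < n | (j <= k < l)%N) a k + tailsum l.
Proof.
move=> hjl; rewrite /tailsum (bigID (fun k : 'I_n => (k < l)%N)) /=.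
by congr (_ + _); apply: eq_bigl => k /=; apply/idP/idP => [/andP[]|]; lia.
Qed.

Lemma tailsumS (k : 'I_n) : tailsum k = a k + tailsum k.+1.
Proof.
rewrite (tailsum_split (leqnSn k)) (big_pred1 k) // => l /=.
by apply/idP/eqP => [h|->]; [apply: val_inj => /=; lia | rewrite leqnn ltnSn].
Qed.

Lemma tailsum_const j l : (j <= l)%N ->
  (forall k : 'I_n, (j <= k < l)%N -> a k = 0) -> tailsum j = tailsum l.
Proof. by move=> hjl a0; rewrite (tailsum_split hjl) big1 ?add0r. Qed.

End TailSums.

Lemma sum_tailsum (R : pzSemiRingType) n (a : 'I_n -> R) :
  \sum_(j < n.+1) tailsum a j = \sum_(k < n) (k.+1)%:R * a k.
Proof.
rewrite /tailsum; under eq_bigr do rewrite big_mkcond.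
rewrite exchange_big /=; apply: eq_bigr => k _.
rewrite -big_mkcond /= -(big_mkord (fun j => (j <= k)%N) (fun _ => a k)).
rewrite -(big_nat_widen 0 k.+1 n.+1 xpredT) /=; last by have := ltn_ord k; lia.
by rewrite sumr_const_nat subn0 mulr_natl.
Qed.

Lemma mu_of_tailsum (R : fieldType) n (a : 'I_n -> R) :
  mu_of a = \sum_(j < n.+1) tailsum a j *: eps R j.
Proof.
rewrite /mu_of /lambda; under eq_bigr do rewrite scaler_sumr big_mkcond.
rewrite exchange_big /=; apply: eq_bigr => j _.
rewrite /tailsum scaler_suml [RHS]big_mkcond /=; apply: eq_bigr => k _.
by rewrite ltnS; case: (j <= k)%N; rewrite ?scale0r.
Qed.

Lemma eps_comb_coord_sub (R : fieldType) n (x : 'I_n.+1 -> R) m :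
  (\sum_j x j *: eps R j) 0 m - (\sum_j x j *: eps R j) 0 ord_max
  = x m - x ord_max.
Proof.
have coord p : (\sum_j x j *: eps R j) 0 p = x p - (\sum_j x j) / n.+1%:R.
  rewrite summxE; under eq_bigr do rewrite !mxE mulrBr.
  rewrite sumrB -mulr_suml (bigD1 p) //= eqxx mulr1 big1 ?addr0 // => j jp.
  by rewrite eq_sym (negbTE jp) mulr0.
by rewrite !coord; ring.
Qed.

Lemma eps_comb_inj (R : fieldType) n (x y : 'I_n.+1 -> R) :
  \sum_j x j *: eps R j = \sum_j y j *: eps R j -> x ord_max = y ord_max ->
  x =1 y.
Proof.
move=> exy emax m; have := eps_comb_coord_sub x m.
by rewrite exy eps_comb_coord_sub emax => /addIr.
Qed.

Lemma sum_set_eps (R : fieldType) n (S : {set 'I_n.+1}) :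
  \sum_(k in S) eps R k = \sum_j (j \in S)%:R *: eps R j.
Proof.
by rewrite big_mkcond; apply: eq_bigr => j _; case: (j \in S); rewrite ?scale1r ?scale0r.
Qed.

Lemma sum_indicator_card (R : pzSemiRingType) (T : finType) (S : {set T}) :
  \sum_j (j \in S)%:R = #|S|%:R :> R.
Proof.
rewrite -sumr_const [RHS]big_mkcond /=.
by apply: eq_bigr => j _; case: (j \in S).
Qed.

Lemma pos_weight_tailsumP (R : numFieldType) n i (a : 'I_n -> R) :
  is_pos_weight_fund i (mu_of a) <->
  (forall j, tailsum a j = 0 \/ tailsum a j = 1) /\
  \sum_(j < n.+1) tailsum a j = i%:R.
Proof.
split=> [[S [cardS notmaxS muS]] | [tailsum01 sum_i]].
  have tailsum_indicator : forall m : 'I_n.+1, tailsum a m = (m \in S)%:R.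
    apply: eps_comb_inj; first by rewrite -mu_of_tailsum muS sum_set_eps.
    by rewrite tailsum_ge // (negbTE notmaxS).
  split; last by rewrite (eq_bigr _ (fun j _ => tailsum_indicator j)) sum_indicator_card cardS.
  move=> j; case: (leqP n j) => [/tailsum_ge|hj]; first by left.
  have hj1 : (j < n.+1)%N by exact: ltnW.
  by rewrite (tailsum_indicator (Ordinal hj1)); case: (_ \in _); [right|left].
pose S := [set m : 'I_n.+1 | tailsum a m == 1].
have tailsum_indicator (m : 'I_n.+1) : tailsum a m = (m \in S)%:R.
  by rewrite inE; case: (tailsum01 m) => ->; rewrite ?eqxx // eq_sym oner_eq0.
exists S; split.
- apply/eqP; rewrite -(eqr_nat R) -sum_indicator_card -sum_i.
  by apply/eqP/eq_bigr => j _; rewrite tailsum_indicator.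
- by rewrite inE tailsum_ge // eq_sym oner_eq0.
- by rewrite mu_of_tailsum sum_set_eps; apply: eq_bigr => j _; rewrite tailsum_indicator.
Qed.

Lemma leq_ind_down n (P : nat -> Prop) :
  (forall j, (n <= j)%N -> P j) -> (forall j, (j < n)%N -> P j.+1 -> P j) ->
  forall j, P j.
Proof.
move=> top step j; elim: (n - j)%N {-2}j (leqnn (n - j)) => [|d IH] {}j hj.
  by apply: top; lia.
by case: (leqP n j) => [/top //|hjn]; apply: step => //; apply: IH; lia.
Qed.

Section SignedSequences.
Variables (R : realFieldType) (n : nat) (a : 'I_n -> R).

Lemma tailsum01_of_cond1 : cond1 a -> forall j, tailsum a j = 0 \/ tailsum a j = 1.
Proof.
case=> a_sign _ a_last a_alt.
(* [1 - a_k] is twice the tail sum after the nonzero [a_k]: the remaining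
   nonzero coefficients start with [- a_k] and alternate up to the final +1. *)
pose P j := (tailsum a j = 0 \/ tailsum a j = 1) /\
  forall k : 'I_n, (k < j)%N -> a k != 0 ->
    (forall l : 'I_n, (k < l)%N -> (l < j)%N -> a l = 0) ->
    2 * tailsum a j = 1 - a k.
suff tailsumP : forall j, P j by move=> j; case: (tailsumP j).
apply: (@leq_ind_down n) => j hj.
  split=> [|k _ ak0 zeros]; first by left; rewrite tailsum_ge.
  rewrite tailsum_ge // (a_last k ak0) => [|l kl]; first lra.
  by apply: zeros => //; apply: leq_trans (ltn_ord l) hj.
move=> [tailsum01 tailsum_next]; pose o := Ordinal hj.
have tailsum_o : tailsum a j = a o + tailsum a j.+1 := tailsumS a o.
have [ao0 | aoN0] := eqVneq (a o) 0.
  rewrite /P tailsum_o ao0 add0r; split=> // k kj ak0 zeros.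
  apply: tailsum_next => // [|l kl]; first lia.
  rewrite ltnS leq_eqVlt => /orP[/eqP lj | lj]; last exact: zeros.
  by have -> : l = o by apply: val_inj.
have next_o : 2 * tailsum a j.+1 = 1 - a o.
  by apply: tailsum_next => // l ol lj; rewrite /= in ol; lia.
split=> [|k kj ak0 zeros]; last first.
  by have := a_alt k o kj ak0 aoN0 zeros; rewrite tailsum_o; lra.
case: (a_sign o) => [ao | [ao | ao]]; last by right; rewrite tailsum_o; lra.
- by left; rewrite tailsum_o; lra.
- by rewrite ao eqxx in aoN0.
Qed.

Hypothesis tailsum01 : forall j, tailsum a j = 0 \/ tailsum a j = 1.

Lemma coef_tailsumB (k : 'I_n) : a k = tailsum a k - tailsum a k.+1.
Proof. by rewrite tailsumS addrK. Qed.

Lemma coef_nz_tailsum (k : 'I_n) : a k != 0 -> a k = 1 - 2 * tailsum a k.+1.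
Proof.
rewrite coef_tailsumB.
by case: (tailsum01 k) (tailsum01 k.+1) => -> [] ->; rewrite ?subrr ?eqxx //; lra.
Qed.

Lemma cond1_of_tailsum01 : (exists k, a k != 0) -> cond1 a.
Proof.
move=> a_nz; split=> // [k | k ak0 zeros | k l kl ak0 al0 zeros].
- rewrite coef_tailsumB.
  case: (tailsum01 k) (tailsum01 k.+1) => -> [] ->;
    by [right; left; rewrite subrr | left; rewrite sub0r | right; right; rewrite subr0
       | right; left; rewrite subrr].
- rewrite coef_nz_tailsum // (@tailsum_const _ _ _ k.+1 n) ?tailsum_ge //; first lra.
  by move=> l /andP[kl _]; apply: zeros.
- have eq_next : tailsum a k.+1 = tailsum a l.
    by apply: tailsum_const => // m /andP[km lm]; apply: zeros.
  have := coef_nz_tailsum ak0; have := coef_nz_tailsum al0.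
  have := coef_tailsumB l; lra.
Qed.

End SignedSequences.

Theorem mainTheorem2 (R : realFieldType) (n i : nat)
    (hn : (1 <= n)%N) (hi1 : (1 <= i)%N) (hi2 : (i <= n)%N) (a : 'I_n -> R) :
  @is_pos_weight_fund R n i (mu_of a) <-> (cond1 a /\ cond2 i a).
Proof.
rewrite pos_weight_tailsumP /cond2 -sum_tailsum.
split=> [[tailsum01 sum_i] | [c1 sum_i]]; last by split=> //; exact: tailsum01_of_cond1.
split=> //; apply: cond1_of_tailsum01 => //.
case: (pickP (fun k => a k != 0)) => [k ak0 | a0]; first by exists k.
move: sum_i; rewrite big1 => [/esym/eqP | j _]; first by rewrite pnatr_eq0 eqn0Ngt hi1.
by rewrite /tailsum big1 // => k _; apply/eqP/negbFE/a0.
Qed.
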